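(* Let $a$ and $b$ be relatively prime integers with $1<a<b$, let $(u,v)$ be the definitely least solution of the Diophantine equation $ax+by=1$, and let $S=\langle a,b\rangle=\{\lambda_1a+\lambda_2b:\lambda_1,\lambda_2\in\mathbb{N}\}$. Then the number of isolated gaps of $S$ is $\#I(S)=|uv|$.
   Context: $\mathbb{N}$ denotes the set of nonnegative integers. A gap of a numerical semigroup $S\subseteq\mathbb{N}$ is an element of $\mathbb{N}\setminus S$. An isolated gap of $S$ is a gap $x$ of $S$ such that $x-1\in S$ and $x+1\in S$; $I(S)$ denotes the set of isolated gaps of $S$. For relatively prime positive integers $a,b$, a solution $(u,v)\in\mathbb{Z}^2$ of $ax+by=1$ is the definitely least solution if both $|u|$ and $|v|$ attain their least possible values among all integer solutions; such a solution exists and is unique, and a solution $(x_0,y_0)$ is the definitely least solution if and only if $|x_0|\le b/2$ and $|y_0|\le a/2$. *)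

From Stdlib Require Import ZArith List.
Open Scope Z_scope.

Definition in_semigroup2 (a b x : Z) : Prop :=
  exists l1 l2 : nat, x = Z.of_nat l1 * a + Z.of_nat l2 * b.

Definition is_gap2 (a b x : Z) : Prop := 0 <= x /\ ~ in_semigroup2 a b x.

Definition is_isolated_gap2 (a b x : Z) : Prop :=
  is_gap2 a b x /\ in_semigroup2 a b (x - 1) /\ in_semigroup2 a b (x + 1).

Definition definitely_least_solution (a b u v : Z) : Prop :=
  a * u + b * v = 1 /\
  forall x y : Z, a * x + b * y = 1 -> Z.abs u <= Z.abs x /\ Z.abs v <= Z.abs y.

(* Bezout gives every integer a unique representation x = i a + j b with
   0 <= i < b, and x lies in <a,b> exactly when j >= 0.  Write the definitely
   least solution as a u - b w = 1 with 0 < u <= b/2 and 0 < w <= a/2 (after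
   swapping a and b if needed).  Since x +- 1 = (i +- u) a + (j -+ w) b, the
   reduced representation shows that x is an isolated gap iff b - u <= i < b
   and -w <= j < 0: a box with u * w points. *)
From Stdlib Require Import ZArith List Lia.
Open Scope Z_scope.

Lemma NoDup_list_prod {A B : Type} (l : list A) (l' : list B) :
  NoDup l -> NoDup l' -> NoDup (list_prod l l').
Proof.
  induction 1 as [|x l Hx _ IH]; intros Hl'; simpl; [constructor|].
  apply NoDup_app.
  - apply NoDup_map_NoDup_ForallPairs; [|exact Hl'].
    intros y z _ _ E. now injection E.
  - now apply IH.
  - intros [y z] Hin Hin'. apply in_map_iff in Hin as [z' [E _]].
    injection E as <- <-. apply in_prod_iff in Hin' as [Hy _]. tauto.
Qed.

Definition zrange (s n : Z) : list Z :=
  map (fun k => s + Z.of_nat k) (seq 0 (Z.to_nat n)).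

Lemma in_zrange s n i : 0 <= n -> In i (zrange s n) <-> s <= i < s + n.
Proof.
  intros Hn. unfold zrange. rewrite in_map_iff. split.
  - intros [k [<- Hk]]. apply in_seq in Hk. lia.
  - intros H. exists (Z.to_nat (i - s)). split; [lia|]. apply in_seq. lia.
Qed.

Lemma NoDup_zrange s n : NoDup (zrange s n).
Proof.
  apply NoDup_map_NoDup_ForallPairs; [|apply seq_NoDup].
  intros x y _ _ E. lia.
Qed.

Lemma length_zrange s n : length (zrange s n) = Z.to_nat n.
Proof. unfold zrange. now rewrite length_map, length_seq. Qed.

Lemma in_semigroup2_iff a b x :
  in_semigroup2 a b x <-> exists p q, 0 <= p /\ 0 <= q /\ x = p * a + q * b.
Proof.
  split.
  - intros [l1 [l2 E]]. exists (Z.of_nat l1), (Z.of_nat l2). lia.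
  - intros (p & q & Hp & Hq & E). exists (Z.to_nat p), (Z.to_nat q).
    rewrite !Z2Nat.id; lia.
Qed.

Lemma in_semigroup2_nonneg a b x :
  0 <= a -> 0 <= b -> in_semigroup2 a b x -> 0 <= x.
Proof. intros Ha Hb [l1 [l2 E]]. nia. Qed.

Lemma in_semigroup2_comm a b x : in_semigroup2 a b x <-> in_semigroup2 b a x.
Proof. split; intros [l1 [l2 E]]; exists l2, l1; lia. Qed.

Lemma is_isolated_gap2_comm a b x :
  is_isolated_gap2 a b x <-> is_isolated_gap2 b a x.
Proof. unfold is_isolated_gap2, is_gap2. rewrite !(in_semigroup2_comm a b). tauto. Qed.

Lemma definitely_least_bounds a b u v :
  1 < a -> 1 < b -> definitely_least_solution a b u v ->
  2 * Z.abs u <= b /\ 2 * Z.abs v <= a /\ u * v < 0.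
Proof.
  intros Ha Hb [E Hmin].
  destruct (Hmin (u - b) (v + a)) as [Hu1 Hv1]; [lia|].
  destruct (Hmin (u + b) (v - a)) as [Hu2 Hv2]; [lia|].
  assert (u <> 0) by (intros ->; destruct (Z_lt_le_dec v 1); nia).
  assert (v <> 0) by (intros ->; destruct (Z_lt_le_dec u 1); nia).
  repeat split; [lia|lia|].
  destruct (Z_lt_le_dec u 0), (Z_lt_le_dec v 0); nia.
Qed.

Section BezoutBox.

Variables a b u w : Z.
Hypothesis bezout : a * u - b * w = 1.

Lemma bezout_same_value c d p q :
  c * a + d * b = p * a + q * b -> exists k, p - c = k * b /\ d - q = k * a.
Proof.
  intros E. assert (E' : (p - c) * a = (d - q) * b) by lia.
  exists ((d - q) * u - (p - c) * w).
  split.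
  - pose proof (f_equal (Z.mul u) E').
    transitivity ((p - c) * (a * u - b * w)); [rewrite bezout | ]; lia.
  - pose proof (f_equal (Z.mul w) E').
    transitivity ((d - q) * (a * u - b * w)); [rewrite bezout | ]; lia.
Qed.

Hypotheses (Ha : 0 < a) (Hb : 0 < b).

Lemma reduced_rep_exists x : exists i j, 0 <= i < b /\ x = i * a + j * b.
Proof.
  exists ((x * u) mod b), (- x * w + (x * u / b) * a).
  split; [apply Z.mod_pos_bound; lia|].
  pose proof (Z.div_mod (x * u) b ltac:(lia)).
  transitivity (x * (a * u - b * w)); [rewrite bezout; ring | nia].
Qed.

Lemma reduced_rep_unique i j i' j' :
  0 <= i < b -> 0 <= i' < b -> i * a + j * b = i' * a + j' * b -> i = i' /\ j = j'.
Proof.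
  intros Hi Hi' E. destruct (bezout_same_value _ _ _ _ E) as (k & Hk1 & Hk2).
  assert (k = 0) by nia. subst k. lia.
Qed.

Lemma in_semigroup2_reduced i j :
  0 <= i < b -> in_semigroup2 a b (i * a + j * b) <-> 0 <= j.
Proof.
  intros Hi. rewrite in_semigroup2_iff. split.
  - intros (p & q & Hp & Hq & E).
    destruct (bezout_same_value _ _ _ _ E) as (k & Hk1 & Hk2).
    assert (0 <= k) by nia. nia.
  - intros Hj. exists i, j. lia.
Qed.

Hypotheses (Hu : 0 < u) (Hw : 0 < w) (Hu2 : 2 * u <= b) (Hw2 : 2 * w <= a).

Lemma is_isolated_gap2_box x :
  is_isolated_gap2 a b x <->
  exists i j, b - u <= i < b /\ -w <= j < 0 /\ x = i * a + j * b.
Proof.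
  assert (Hpred : forall i j, x = i * a + j * b -> x - 1 = (i - u) * a + (j + w) * b)
    by (intros; lia).
  assert (Hsucc : forall i j, x = i * a + j * b -> x + 1 = (i + u) * a + (j - w) * b)
    by (intros; lia).
  split.
  - intros [[_ Hgap] [Hx1 Hx2]].
    destruct (reduced_rep_exists x) as (i & j & Hi & ->).
    rewrite in_semigroup2_reduced in Hgap by exact Hi.
    rewrite (Hsucc i j eq_refl) in Hx2. rewrite (Hpred i j eq_refl) in Hx1.
    assert (Hiu : b <= i + u).
    { destruct (Z_lt_le_dec (i + u) b); [|lia].
      rewrite in_semigroup2_reduced in Hx2; lia. }
    rewrite in_semigroup2_reduced in Hx1 by lia.
    exists i, j. lia.
  - intros (i & j & Hi & Hj & Ex).
    assert (Hx1 : in_semigroup2 a b (x - 1)).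
    { rewrite (Hpred i j Ex). apply in_semigroup2_reduced; lia. }
    repeat split.
    + apply in_semigroup2_nonneg in Hx1; lia.
    + subst x. rewrite in_semigroup2_reduced by lia. lia.
    + exact Hx1.
    + rewrite (Hsucc i j Ex).
      replace ((i + u) * a + (j - w) * b)
        with ((i + u - b) * a + (j - w + a) * b) by ring.
      apply in_semigroup2_reduced; lia.
Qed.

Definition isolated_gap_list : list Z :=
  map (fun ij => fst ij * a + snd ij * b) (list_prod (zrange (b - u) u) (zrange (- w) w)).

Lemma NoDup_isolated_gap_list : NoDup isolated_gap_list.
Proof.
  apply NoDup_map_NoDup_ForallPairs.
  - intros [i j] [i' j'] H H' E.
    apply in_prod_iff in H as [Hi _]. apply in_prod_iff in H' as [Hi' _].
    rewrite in_zrange in Hi, Hi' by lia.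
    destruct (reduced_rep_unique i j i' j') as [-> ->]; auto; lia.
  - apply NoDup_list_prod; apply NoDup_zrange.
Qed.

Lemma in_isolated_gap_list x : In x isolated_gap_list <-> is_isolated_gap2 a b x.
Proof.
  rewrite is_isolated_gap2_box. unfold isolated_gap_list. rewrite in_map_iff.
  split.
  - intros [[i j] [E H]]. apply in_prod_iff in H as [Hi Hj].
    rewrite in_zrange in Hi, Hj by lia. exists i, j. simpl in E. lia.
  - intros (i & j & Hi & Hj & E). exists (i, j). split; [simpl; lia|].
    apply in_prod_iff. rewrite !in_zrange by lia. lia.
Qed.

Lemma length_isolated_gap_list : Z.of_nat (length isolated_gap_list) = u * w.
Proof.
  unfold isolated_gap_list.
  rewrite length_map, length_prod, !length_zrange, Nat2Z.inj_mul, !Z2Nat.id; lia.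
Qed.

End BezoutBox.

Lemma isolated_gaps2_enum a b u w :
  a * u - b * w = 1 -> 0 < u -> 0 < w -> 2 * u <= b -> 2 * w <= a ->
  exists l : list Z,
    NoDup l /\ (forall x, In x l <-> is_isolated_gap2 a b x) /\
    Z.of_nat (length l) = u * w.
Proof.
  intros. exists (isolated_gap_list a b u w).
  split; [|split].
  - apply NoDup_isolated_gap_list; lia.
  - intros x. apply in_isolated_gap_list; lia.
  - apply length_isolated_gap_list; lia.
Qed.

Theorem theorem3p4 (a b u v : Z) :
  1 < a -> a < b -> Z.gcd a b = 1 ->
  definitely_least_solution a b u v ->
  exists l : list Z,
    NoDup l /\
    (forall x : Z, In x l <-> is_isolated_gap2 a b x) /\
    Z.of_nat (length l) = Z.abs (u * v).
Proof.
  intros Ha Hab _ Hdls.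
  pose proof Hdls as [Hbez _].
  destruct (definitely_least_bounds a b u v) as (Hu & Hv & Huv);
    [lia | lia | exact Hdls |].
  rewrite Z.abs_mul.
  destruct (Z_lt_le_dec v 0) as [Hv0 | Hv0].
  - destruct (isolated_gaps2_enum a b u (- v)) as (l & Hnd & Hin & Hlen); try nia.
    exists l. split; [exact Hnd | split; [exact Hin | nia]].
  - destruct (isolated_gaps2_enum b a v (- u)) as (l & Hnd & Hin & Hlen); try nia.
    exists l. split; [exact Hnd | split; [|nia]].
    intros x. rewrite is_isolated_gap2_comm. apply Hin.
Qed.
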